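(* The language $L_2=\{\,a^{2^n} b^{n} c^{2^n+n} \mid n \ge 1\,\}$ belongs to $\mathscr{L}_{rt}(\mathrm{MC\text{-}OCA}(1))$.
   Context: A cellular automaton (CA) is a system $\langle S,F,A,B,\#,b_l,b_r,\delta\rangle$ with finite nonempty state set $S$, accepting states $F\subseteq S$, nonempty input alphabet $A\subseteq S$, set $B$ of communication symbols, boundary symbol $\#\notin B$, communication functions $b_l,b_r:S\to B\cup\{\bot\}$ ($\bot$ means nothing is sent), and local transition function $\delta:(B\cup\{\#,\bot\})\times S\times(B\cup\{\#,\bot\})\to S$. On input $w=a_1\cdots a_n$ the cells $1,\dots,n$ start in $c_0(i)=a_i$ and update synchronously by $c_{t+1}(i)=\delta(b_r(c_t(i-1)),c_t(i),b_l(c_t(i+1)))$; the outer cells receive $\#$ on their free side at the first step and $\bot$ afterwards. Acceptance: the leftmost cell enters an accepting state at some time. Time complexity $t$: every accepted $w$ is accepted within $t(|w|)$ steps; real time: $t(n)=n$. A one-way CA (OCA) has $b_r\equiv\bot$ and the leftmost cell gets no boundary symbol. $\mathrm{com}(i,t)$ is the number of steps $j<t$ with $b_r(c_j(i))\ne\bot$ or $b_l(c_j(i+1))\ne\bot$; $\mathrm{mcom}(w)=\max_i \mathrm{com}(i,t(|w|))$. $\mathrm{MC\text{-}OCA}(f)$ denotes OCAs such that every accepted $w$ is accepted with $\mathrm{mcom}(w)\le g(|w|)$ for some $g\in O(f)$; $\mathscr{L}_{rt}(X)$ is the family of languages accepted by real-time devices of type $X$. *)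

From mathcomp Require Import all_boot.
Set Implicit Arguments. Unset Strict Implicit. Unset Printing Implicit Defensive.

(* What a cell receives from a neighbour: a communication symbol,
   the boundary symbol #, or nothing (bottom). *)
Inductive msg (B : Type) := MSym of B | MBound | MNone.
Arguments MBound {B}. Arguments MNone {B}.

Definition of_opt (B : Type) (o : option B) : msg B :=
  if o is Some b then MSym b else MNone.

(* A cellular automaton over input alphabet Sigma.  The input alphabet
   A ⊆ S is represented by an injective embedding inp : Sigma -> S.
   Sending nothing (bottom) is None. *)
Record CA (Sigma : Type) := {
  st : finType;
  acc : pred st;
  inp : Sigma -> st;
  inp_inj : injective inp;
  comm : finType;
  bl : st -> option comm;
  br : st -> option comm;
  delta : msg comm -> st -> msg comm -> st
}.
Arguments st {Sigma} _. Arguments acc {Sigma} _ _. Arguments inp {Sigma} _ _.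
Arguments comm {Sigma} _. Arguments bl {Sigma} _ _. Arguments br {Sigma} _ _.
Arguments delta {Sigma} _ _ _ _.

Definition is_OCA (Sigma : Type) (M : CA Sigma) : Prop := forall s, br M s = None.

Section Run.
Variables (Sigma : Type) (M : CA Sigma).
(* lb = true : the leftmost cell receives # at the first step (two-way CA);
   lb = false: the leftmost cell gets no boundary symbol (OCA).
   Cells are numbered 0 .. n-1 (paper: 1 .. n). *)
Variable lb : bool.

Definition lmsg (c : nat -> st M) (t i : nat) : msg (comm M) :=
  if i == 0 then (if lb && (t == 0) then MBound else MNone)
  else of_opt (br M (c i.-1)).

Definition rmsg (n : nat) (c : nat -> st M) (t i : nat) : msg (comm M) :=
  if i.+1 == n then (if t == 0 then MBound else MNone)
  else of_opt (bl M (c i.+1)).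

(* Configuration c_t on input w; x0 is only a dummy default letter. *)
Fixpoint conf (x0 : Sigma) (w : seq Sigma) (t : nat) : nat -> st M :=
  match t with
  | 0 => fun i => inp M (nth x0 w i)
  | t'.+1 => let c := conf x0 w t' in
             fun i => delta M (lmsg c t' i) (c i) (rmsg (size w) c t' i)
  end.

Definition accepts_within (w : seq Sigma) (T : nat) : Prop :=
  match w with
  | [::] => False
  | x :: _ => exists2 t, t <= T & acc M (conf x w t 0)
  end.

Definition accepts (w : seq Sigma) : Prop := exists T, accepts_within w T.

Definition com (x0 : Sigma) (w : seq Sigma) (i T : nat) : nat :=
  #|[pred j : 'I_T | (br M (conf x0 w j i) != None)
                     || (bl M (conf x0 w j i.+1) != None)]|.

Definition mcom (w : seq Sigma) (T : nat) : nat :=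
  match w with
  | [::] => 0
  | x :: _ => \max_(i < (size w).-1) com x w i T
  end.
End Run.

Definition bigO (g f : nat -> nat) : Prop :=
  exists C N, forall n, N <= n -> g n <= C * f n.

Definition in_Lrt_MC_OCA (Sigma : Type) (f : nat -> nat) (L : seq Sigma -> Prop) : Prop :=
  exists M : CA Sigma,
    [/\ is_OCA M,
        (forall w, L w <-> accepts M false w),
        (forall w, accepts M false w -> accepts_within M false w (size w)) &
        exists g, bigO g f /\
          forall w, accepts M false w -> mcom M false w (size w) <= g (size w)].

Inductive abc := a | b | c.

Definition L2 (w : seq abc) : Prop :=
  exists n, 1 <= n /\ w = nseq (2 ^ n) a ++ nseq n b ++ nseq (2 ^ n + n) c.

(* At time 0 every cell sends its letter to the left; afterwards it runs seven
   signals, each forwarded to the left at most once (hence the bound 8, proved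
   with a potential).  On a^A b^n c^C, with D the distance of an a-cell to the
   first b: F runs from the right end at speed 1 while the letters fit a+b+c+;
   K runs from the last b at speed 1/2, so F and K meet at cell 0 iff
   C = A + n; H runs from the last b at speed 1 over the b's and 1/2 over the
   a's, reaching D at time 2D + n - 1; L1 and L2 run from the last a at speeds
   1/2 and 1/3 and, reflected by the signal Z, mark the distances D that are
   powers of two; G runs from the last a, spending two steps per cell and a
   third one on marked cells, so it reaches D at time 2D - 1 + up_log 2 D.
   Cell 0 accepts when F and K arrive, it is marked and G met H there, i.e.
   iff A = 2^n and C = A + n. *)

From HB Require Import structures.
From mathcomp Require Import all_boot zify.
Set Implicit Arguments. Unset Strict Implicit. Unset Printing Implicit Defensive.

Definition abc_code (x : abc) : 'I_3 := inord (match x with a => 0 | b => 1 | c => 2 end).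
Definition abc_decode (i : 'I_3) : abc := nth c [:: a; b] i.
Lemma abc_codeK : cancel abc_code abc_decode.
Proof. by case; rewrite /abc_decode inordK. Qed.
HB.instance Definition _ := Finite.copy abc (can_type abc_codeK).

(* What a cell learns at time 0 about its right neighbour. *)
Inductive nbr := NbA | NbB | NbC | NbEnd | NbNone.
Definition nbr_code (x : nbr) : 'I_5 :=
  inord (match x with NbA => 0 | NbB => 1 | NbC => 2 | NbEnd => 3 | NbNone => 4 end).
Definition nbr_decode (i : 'I_5) : nbr := nth NbNone [:: NbA; NbB; NbC; NbEnd] i.
Lemma nbr_codeK : cancel nbr_code nbr_decode.
Proof. by case; rewrite /nbr_decode inordK. Qed.
HB.instance Definition _ := Finite.copy nbr (can_type nbr_codeK).

(* K, H, L1: waiting, received, sending (one step after reception), done;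
   the H signal is already sent in the received phase by a b-cell.
   G: waiting, received, held (sent now if the cell is unmarked), extra step of
   a marked cell (sent now), done.
   L2: waiting, started (only at the last a), received, held, sending, done.
   Z: waiting, passing through (sent now), marked (sent when L2 is received),
   marked and already emitted, done. *)
Inductive fphase := FWait | FSend | FDone.
Inductive kphase := KWait | KGot | KSend | KDone.
Inductive gphase := GWait | GGot | GHold | GExtra | GDone.
Inductive tphase := TWait | TStart | TGot | THold | TSend | TDone.
Inductive zphase := ZWait | ZPass | ZMark | ZEmitted | ZDone.

Definition fphase_code (x : fphase) : 'I_3 :=
  inord (match x with FWait => 0 | FSend => 1 | FDone => 2 end).
Definition fphase_decode (i : 'I_3) : fphase := nth FDone [:: FWait; FSend] i.
Lemma fphase_codeK : cancel fphase_code fphase_decode.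
Proof. by case; rewrite /fphase_decode inordK. Qed.
HB.instance Definition _ := Finite.copy fphase (can_type fphase_codeK).

Definition kphase_code (x : kphase) : 'I_4 :=
  inord (match x with KWait => 0 | KGot => 1 | KSend => 2 | KDone => 3 end).
Definition kphase_decode (i : 'I_4) : kphase := nth KDone [:: KWait; KGot; KSend] i.
Lemma kphase_codeK : cancel kphase_code kphase_decode.
Proof. by case; rewrite /kphase_decode inordK. Qed.
HB.instance Definition _ := Finite.copy kphase (can_type kphase_codeK).

Definition gphase_code (x : gphase) : 'I_5 :=
  inord (match x with GWait => 0 | GGot => 1 | GHold => 2 | GExtra => 3 | GDone => 4 end).
Definition gphase_decode (i : 'I_5) : gphase := nth GDone [:: GWait; GGot; GHold; GExtra] i.
Lemma gphase_codeK : cancel gphase_code gphase_decode.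
Proof. by case; rewrite /gphase_decode inordK. Qed.
HB.instance Definition _ := Finite.copy gphase (can_type gphase_codeK).

Definition tphase_code (x : tphase) : 'I_6 :=
  inord (match x with
         | TWait => 0 | TStart => 1 | TGot => 2 | THold => 3 | TSend => 4 | TDone => 5 end).
Definition tphase_decode (i : 'I_6) : tphase :=
  nth TDone [:: TWait; TStart; TGot; THold; TSend] i.
Lemma tphase_codeK : cancel tphase_code tphase_decode.
Proof. by case; rewrite /tphase_decode inordK. Qed.
HB.instance Definition _ := Finite.copy tphase (can_type tphase_codeK).

Definition zphase_code (x : zphase) : 'I_5 :=
  inord (match x with ZWait => 0 | ZPass => 1 | ZMark => 2 | ZEmitted => 3 | ZDone => 4 end).
Definition zphase_decode (i : 'I_5) : zphase := nth ZDone [:: ZWait; ZPass; ZMark; ZEmitted] i.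
Lemma zphase_codeK : cancel zphase_code zphase_decode.
Proof. by case; rewrite /zphase_decode inordK. Qed.
HB.instance Definition _ := Finite.copy zphase (can_type zphase_codeK).

Record cell := Cell {
  own : abc;
  rnb : nbr;
  fsig : fphase;
  ksig : kphase;
  hsig : kphase;
  gsig : gphase;
  l1sig : kphase;
  l2sig : tphase;
  zsig : zphase;
  met : bool        (* G and H arrived at this cell at the same time *)
}.
Definition cell_code (r : cell) :=
  (own r, rnb r, fsig r, ksig r, hsig r, gsig r, l1sig r, l2sig r, zsig r, met r).
Definition cell_decode (x : abc * nbr * fphase * kphase * kphase * gphase * kphase
                           * tphase * zphase * bool) : cell :=
  let: (x1, x2, x3, x4, x5, x6, x7, x8, x9, x10) := x in
  Cell x1 x2 x3 x4 x5 x6 x7 x8 x9 x10.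
Lemma cell_codeK : cancel cell_code cell_decode. Proof. by case. Qed.
HB.instance Definition _ := Finite.copy cell (can_type cell_codeK).

(* A message to the left neighbour: a letter (only at time 0) and one bit per
   signal. *)
Record message := Msg {
  mletter : option abc;
  mF : bool; mK : bool; mH : bool; mG : bool; mL1 : bool; mL2 : bool; mZ : bool
}.
Definition message_code (m : message) :=
  (mletter m, mF m, mK m, mH m, mG m, mL1 m, mL2 m, mZ m).
Definition message_decode (x : option abc * bool * bool * bool * bool * bool * bool * bool)
  : message :=
  let: (x1, x2, x3, x4, x5, x6, x7, x8) := x in Msg x1 x2 x3 x4 x5 x6 x7 x8.
Lemma message_codeK : cancel message_code message_decode. Proof. by case. Qed.
HB.instance Definition _ := Finite.copy message (can_type message_codeK).

(* Before its first step a cell is in the input state [inl x]. *)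
Definition state : finType := (abc + cell)%type.

Definition is_KWait (k : kphase) : bool := if k is KWait then true else false.
Definition is_KSend (k : kphase) : bool := if k is KSend then true else false.
Definition is_GWait (g : gphase) : bool := if g is GWait then true else false.
Definition is_TGot (l : tphase) : bool := if l is TGot then true else false.
Definition is_TSend (l : tphase) : bool := if l is TSend then true else false.

Definition marked (r : cell) : bool :=
  match zsig r with ZMark | ZEmitted => true | _ => false end.

Definition sends_F (r : cell) : bool := if fsig r is FSend then true else false.
Definition sends_K (r : cell) : bool := is_KSend (ksig r).
Definition sends_H (r : cell) : bool :=
  match hsig r with KGot => if own r is a then false else true | KSend => true | _ => false end.
Definition sends_G (r : cell) : bool :=
  match gsig r with GHold => ~~ marked r | GExtra => true | _ => false end.
Definition sends_L1 (r : cell) : bool := is_KSend (l1sig r).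
Definition sends_L2 (r : cell) : bool := is_TSend (l2sig r).
Definition sends_Z (r : cell) : bool :=
  match zsig r with ZPass => true | ZMark => is_TGot (l2sig r) | _ => false end.
Definition sends_any (r : cell) : bool :=
  [|| sends_F r, sends_K r, sends_H r, sends_G r, sends_L1 r, sends_L2 r | sends_Z r].

Definition out_msg (r : cell) : message :=
  Msg None (sends_F r) (sends_K r) (sends_H r) (sends_G r) (sends_L1 r) (sends_L2 r) (sends_Z r).
Definition silent : message := Msg None false false false false false false false.
Definition letter_msg (x : abc) : message := Msg (Some x) false false false false false false false.

Definition send_left (s : state) : option message :=
  match s with
  | inl x => Some (letter_msg x)
  | inr r => if sends_any r then Some (out_msg r) else None
  end.

Definition nbr_of_letter (x : abc) : nbr :=
  match x with a => NbA | b => NbB | c => NbC end.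
Definition nbr_of_msg (m : msg message) : nbr :=
  match m with
  | MBound => NbEnd
  | MSym r => if mletter r is Some y then nbr_of_letter y else NbNone
  | MNone => NbNone
  end.

(* The pairs (letter, right neighbour) allowed in a word of a+b+c+. *)
Definition good_pair (x : abc) (y : nbr) : bool :=
  match x, y with a, NbA | a, NbB | b, NbB | b, NbC | c, NbC | c, NbEnd => true | _, _ => false end.

(* First step: the cell stores its right neighbour's letter; F starts at the
   rightmost cell if it holds a c, K and H start at the last b, and G, L1, L2
   and Z start at the last a. *)
Definition first_step (x : abc) (m : msg message) : cell :=
  let y := nbr_of_msg m in
  let last_a := (if x is a then true else false) && (if y is NbB then true else false) in
  let last_b := (if x is b then true else false) && (if y is NbC then true else false) in
  Cell x y
    (if (if x is c then true else false) && (if y is NbEnd then true else false)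
     then FSend else FWait)
    (if last_b then KGot else KWait) (if last_b then KGot else KWait)
    (if last_a then GGot else GWait) (if last_a then KGot else KWait)
    (if last_a then TStart else TWait) (if last_a then ZMark else ZWait) false.

Definition fstep (f : fphase) (got : bool) : fphase :=
  match f with FWait => if got then FSend else FWait | _ => FDone end.
Definition kstep (k : kphase) (got : bool) : kphase :=
  match k with KWait => if got then KGot else KWait | KGot => KSend | _ => KDone end.
Definition hstep (x : abc) (k : kphase) (got : bool) : kphase :=
  match k with
  | KWait => if got then KGot else KWait
  | KGot => if x is a then KSend else KDone
  | _ => KDone
  end.
Definition gstep (g : gphase) (got mark : bool) : gphase :=
  match g with
  | GWait => if got then GGot else GWait
  | GGot => GHold
  | GHold => if mark then GExtra else GDone
  | _ => GDone
  end.
Definition tstep (l : tphase) (got : bool) : tphase :=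
  match l with
  | TWait => if got then TGot else TWait
  | TStart => TGot | TGot => THold | THold => TSend | _ => TDone
  end.
Definition zstep (z : zphase) (l : tphase) (gotZ gotL1 : bool) : zphase :=
  match z with
  | ZWait => if gotZ then (if gotL1 then ZMark else ZPass) else ZWait
  | ZPass => ZDone
  | ZMark => if l is TGot then ZEmitted else ZMark
  | ZEmitted => ZEmitted
  | ZDone => ZDone
  end.

Definition later_step (r : cell) (i : message) : cell :=
  Cell (own r) (rnb r)
    (fstep (fsig r) (mF i && good_pair (own r) (rnb r)))
    (kstep (ksig r) (mK i))
    (hstep (own r) (hsig r) (mH i))
    (gstep (gsig r) (mG i) (marked r))
    (kstep (l1sig r) (mL1 i))
    (tstep (l2sig r) (mL2 i))
    (zstep (zsig r) (l2sig r) (mZ i) (mL1 i))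
    (met r || [&& is_GWait (gsig r), mG i, is_KWait (hsig r) & mH i]).

Definition received (m : msg message) : message := if m is MSym x then x else silent.

Definition transition (lm : msg message) (s : state) (m : msg message) : state :=
  match s with
  | inl x => inr (first_step x m)
  | inr r => inr (later_step r (received m))
  end.

Definition accepting (s : state) : bool :=
  if s is inr r then
    [&& (if own r is a then true else false), sends_F r, sends_K r, marked r & met r]
  else false.

Definition L2_oca : CA abc := {|
  st := state; acc := accepting; inp := inl; inp_inj := @inl_inj abc cell;
  comm := message; bl := send_left; br := fun _ => None; delta := transition |}.

Definition live_f (f : fphase) : nat := if f is FDone then 0 else 1.
Definition live_k (k : kphase) : nat := if k is KDone then 0 else 1.
Definition live_g (g : gphase) : nat := if g is GDone then 0 else 1.
Definition live_t (l : tphase) : nat := if l is TDone then 0 else 1.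
Definition live_z (z : zphase) : nat := match z with ZEmitted | ZDone => 0 | _ => 1 end.

Definition potential (s : state) : nat :=
  match s with
  | inl _ => 8
  | inr r => live_f (fsig r) + live_k (ksig r) + live_k (hsig r) + live_g (gsig r)
             + live_k (l1sig r) + live_t (l2sig r) + live_z (zsig r)
  end.

(* Each signal is sent at most once, since sending finishes its phase. *)
Lemma potential_later_step r i :
  potential (inr (later_step r i)) + sends_any r <= potential (inr r).
Proof.
have eF : live_f (fsig (later_step r i)) + sends_F r <= live_f (fsig r).
  by case: (r) => x y f *; rewrite /sends_F /=; case: f => //=; case: (_ && _).
have eK : live_k (ksig (later_step r i)) + sends_K r <= live_k (ksig r).
  by case: (r) => x y f k *; rewrite /sends_K /=; case: k => //=; case: (mK i).
have eH : live_k (hsig (later_step r i)) + sends_H r <= live_k (hsig r).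
  by case: (r) => x y f k h *; rewrite /sends_H /=; case: x; case: h => //=; case: (mH i).
have eG : live_g (gsig (later_step r i)) + sends_G r <= live_g (gsig r).
  by case: (r) => x y f k h g l1 l2 z *; rewrite /sends_G /marked /=;
     case: g; case: z => //=; case: (mG i).
have eL1 : live_k (l1sig (later_step r i)) + sends_L1 r <= live_k (l1sig r).
  by case: (r) => x y f k h g l1 *; rewrite /sends_L1 /=; case: l1 => //=; case: (mL1 i).
have eL2 : live_t (l2sig (later_step r i)) + sends_L2 r <= live_t (l2sig r).
  by case: (r) => x y f k h g l1 l2 *; rewrite /sends_L2 /=; case: l2 => //=; case: (mL2 i).
have eZ : live_z (zsig (later_step r i)) + sends_Z r <= live_z (zsig r).
  by case: (r) => x y f k h g l1 l2 z *; rewrite /sends_Z /=;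
     case: z; case: l2 => //=; case: (mZ i); case: (mL1 i).
rewrite /potential /sends_any; lia.
Qed.

Lemma potential_cell r : potential (inr r) < 8.
Proof.
have : live_f (fsig r) <= 1 by case: (fsig r).
have : live_k (ksig r) <= 1 by case: (ksig r).
have : live_k (hsig r) <= 1 by case: (hsig r).
have : live_g (gsig r) <= 1 by case: (gsig r).
have : live_k (l1sig r) <= 1 by case: (l1sig r).
have : live_t (l2sig r) <= 1 by case: (l2sig r).
have : live_z (zsig r) <= 1 by case: (zsig r).
rewrite /potential; lia.
Qed.

Lemma potential_noninc lm s m : potential (transition lm s m) <= potential s.
Proof.
case: s => [x | r]; first exact: ltnW (potential_cell (first_step x m)).
apply: leq_trans (potential_later_step r (received m)); exact: leq_addr.
Qed.

Lemma potential_drop lm s m :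
  send_left s != None -> potential (transition lm s m) < potential s.
Proof.
case: s => [x | r] /=; first by move=> _; apply: (potential_cell (first_step x m)).
case: ifP => // sends _; apply: leq_trans (potential_later_step r (received m)).
by rewrite sends addn1.
Qed.

Lemma card_ord_predS T (P : nat -> bool) :
  #|[pred j : 'I_T.+1 | P j]| = #|[pred j : 'I_T | P j]| + P T.
Proof.
rewrite -!sum1_card !(big_mkcond (fun j => j \in _)) big_ord_recr /=.
by rewrite !inE; case: (P T).
Qed.

Lemma count_potential_drops (S : Type) (pot : S -> nat) (f : nat -> S) (P : nat -> bool) :
  (forall j, pot (f j.+1) <= pot (f j)) -> (forall j, P j -> pot (f j.+1) < pot (f j)) ->
  forall T, #|[pred j : 'I_T | P j]| + pot (f T) <= pot (f 0).
Proof.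
move=> noninc drop; elim=> [|T IH].
  by rewrite -sum1_card big_mkcond big_ord0.
rewrite card_ord_predS; case PT: (P T); have := drop T; have := noninc T; lia.
Qed.

Lemma mcom_L2_oca w T : mcom L2_oca false w T <= 8.
Proof.
case: w => [|x0 w] //=; apply/bigmax_leqP => i _.
have drops := count_potential_drops (f := fun j => conf L2_oca false x0 (x0 :: w) j i.+1)
  (fun j => potential_noninc _ _ _) (fun j => @potential_drop _ _ _) T.
apply: leq_trans (leq_trans (leq_addr _ _) drops) _.
by case: (nth x0 (x0 :: w) i.+1).
Qed.

Definition pow2_floor (D : nat) : nat := 2 ^ trunc_log 2 D.

Definition is_pow2 (D : nat) : bool := D == pow2_floor D.

Lemma pow2_floor_bounds D : 0 < D -> pow2_floor D <= D < 2 * pow2_floor D.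
Proof.
move=> D_gt0; rewrite /pow2_floor mulnC -expnSr.
by have := trunc_log_bounds (isT : 1 < 2) D_gt0.
Qed.

Lemma trunc_log2S D : 0 < D ->
  trunc_log 2 D.+1 = if D.+1 == 2 * pow2_floor D then (trunc_log 2 D).+1
                     else trunc_log 2 D.
Proof.
move=> D_gt0; have /andP[le_pD lt_D2p] := pow2_floor_bounds D_gt0.
case: ifP => [/eqP-> | /negbT ne_D2p].
  by rewrite /pow2_floor mulnC -expnSr trunc_expnK.
apply: trunc_log_eq => //; rewrite expnS -/(pow2_floor D); lia.
Qed.

Lemma is_pow2S D : 0 < D -> is_pow2 D.+1 = (D.+1 == 2 * pow2_floor D).
Proof.
move=> D_gt0; have /andP[le_pD lt_D2p] := pow2_floor_bounds D_gt0.
rewrite /is_pow2 {1}/pow2_floor trunc_log2S //.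
by case: ifP; rewrite ?expnS -/(pow2_floor D); lia.
Qed.

Lemma is_pow2_1 : is_pow2 1.
Proof. by rewrite /is_pow2 /pow2_floor trunc_log1. Qed.

Lemma pow2_floor_pred D : 1 < D -> ~~ is_pow2 D -> pow2_floor D = pow2_floor D.-1.
Proof.
move=> D_gt1; rewrite -(ltn_predK D_gt1) is_pow2S ?ltn_predRL // => ne.
by rewrite {1}/pow2_floor trunc_log2S ?ltn_predRL // (negbTE ne).
Qed.

Lemma up_log2S D : 0 < D -> up_log 2 D.+1 = up_log 2 D + is_pow2 D.
Proof.
case: D => [|[|D]] // _.
rewrite !up_log_trunc_log // -!pred_Sn trunc_log2S // is_pow2S //.
by case: ifP; rewrite ?addn1 ?addn0.
Qed.

Lemma is_pow2_expn m : is_pow2 (2 ^ m).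
Proof. by rewrite /is_pow2 /pow2_floor trunc_expnK. Qed.

Lemma is_pow2P D : is_pow2 D -> D = 2 ^ up_log 2 D.
Proof. by rewrite /is_pow2 /pow2_floor => /eqP hD; rewrite hD up_expnK. Qed.

(* Resolve the [if]-conditions of the goal: a condition that linear arithmetic
   decides from the context is rewritten away, otherwise the goal is split on an
   innermost condition; the leaves are closed by linear arithmetic. *)
Ltac decide_conditions :=
  repeat match goal with
  | |- context [if ?cnd then _ else _] =>
      first [ let E := fresh in (have E : cnd by lia); rewrite E /=; clear E
            | let E := fresh in (have E : ~~ cnd by lia); rewrite (negbTE E) /=; clear E ]
  end.
Ltac split_condition :=
  match goal with |- context [if ?cnd then _ else _] =>
    lazymatch cnd with
    | context [if _ then _ else _] => fail
    | _ => let H := fresh in case: (boolP cnd) => H /=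
    end
  end.
Ltac by_conditions :=
  decide_conditions; repeat (split_condition; decide_conditions);
  try first [done | lia | exfalso; lia].

(* Schedules: the phase at time [t] of a signal that reaches a cell at time [s];
   L2, Z and G get dedicated schedules below, indexed by the distance [D] of the
   a-cell to the first b.  Each step lemma says that the schedule is followed
   when the signal is received exactly at time [s]. *)
Definition ksched (s t : nat) : kphase :=
  if t < s then KWait else if t == s then KGot else if t == s.+1 then KSend else KDone.
Definition bsched (s t : nat) : kphase :=
  if t < s then KWait else if t == s then KGot else KDone.
Definition tsched (s t : nat) : tphase :=
  if t < s then TWait else if t == s then TGot else if t == s.+1 then THold
  else if t == s.+2 then TSend else TDone.
Definition gsched (s : nat) (m : bool) (t : nat) : gphase :=
  if t < s then GWait else if t == s then GGot else if t == s.+1 then GHold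
  else if (t == s.+2) && m then GExtra else GDone.

Lemma ksched_step s t : kstep (ksched s t) (t.+1 == s) = ksched s t.+1.
Proof. rewrite /ksched; by_conditions. Qed.
Lemma ksched_send s t : is_KSend (ksched s t) = (t == s.+1).
Proof. rewrite /ksched; by_conditions. Qed.
Lemma ksched_wait s t : is_KWait (ksched s t) = (t < s).
Proof. rewrite /ksched; by_conditions. Qed.

(* G holds one extra step exactly when the cell is marked, which is known when
   G is held. *)
Lemma gsched_step s m t mk :
  (t == s.+1 -> mk = m) -> gstep (gsched s m t) (t.+1 == s) mk = gsched s m t.+1.
Proof. by rewrite /gsched; case: m; case: mk => mkE; by_conditions. Qed.
Lemma gsched_send s m t mk : (t == s.+1 -> mk = m) ->
  (match gsched s m t with GHold => ~~ mk | GExtra => true | _ => false end) = (t == s + 1 + m).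
Proof. by rewrite /gsched; case: m; case: mk => mkE; by_conditions. Qed.
Lemma gsched_wait s m t : is_GWait (gsched s m t) = (t < s).
Proof. rewrite /gsched; case: m; by_conditions. Qed.

(* L2 is received by the a-cell at distance [D] at time [3D - 1]. *)
Definition third_sched (D t : nat) : tphase :=
  if (D == 1) && (t == 1) then TStart else tsched (3 * D - 1) t.

Lemma third_sched_step D t : 0 < D -> 0 < t ->
  tstep (third_sched D t) (t.+1 == 3 * D - 1) = third_sched D t.+1.
Proof. move=> D_gt0 t_gt0; rewrite /third_sched /tsched; by_conditions. Qed.
Lemma third_sched_step1 t : 0 < t -> tstep (third_sched 1 t) false = third_sched 1 t.+1.
Proof. move=> t_gt0; rewrite /third_sched /tsched /=; by_conditions. Qed.
Lemma third_sched_send D t : 0 < D -> 0 < t -> is_TSend (third_sched D t) = (t == 3 * D + 1).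
Proof. move=> D_gt0 t_gt0; rewrite /third_sched /tsched; by_conditions. Qed.
Lemma third_sched_got D t : 0 < D -> 0 < t -> is_TGot (third_sched D t) = (t == 3 * D - 1).
Proof. move=> D_gt0 t_gt0; rewrite /third_sched /tsched; by_conditions. Qed.

(* Z leaves the a-cell at distance [D] at time [mark_time D]: it is emitted at
   time [3q - 1] by the cell at distance [q = pow2_floor D] and then moves at
   speed 1.  It reaches distance [D] at time [mark_arrival D], which is the
   arrival time [2D - 1] of L1 exactly when [D] is a power of two. *)
Definition mark_time (D : nat) : nat := 2 * pow2_floor D + D - 1.
Definition mark_arrival (D : nat) : nat := mark_time D.-1 + 1.

Lemma mark_arrival_ge D : 1 < D -> 2 * D - 1 <= mark_arrival D.
Proof.
move=> D_gt1; have := @pow2_floor_bounds D.-1.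
rewrite /mark_arrival /mark_time; lia.
Qed.

Lemma mark_time_pow2 D : is_pow2 D -> mark_time D = 3 * D - 1.
Proof. by rewrite /is_pow2 /mark_time => /eqP <-; lia. Qed.

Lemma mark_time_npow2 D : 1 < D -> ~~ is_pow2 D -> mark_time D = mark_arrival D.
Proof.
move=> D_gt1 npow2; rewrite /mark_arrival /mark_time pow2_floor_pred //; lia.
Qed.

Lemma is_pow2_arrival D : 1 < D -> is_pow2 D = (mark_arrival D == 2 * D - 1).
Proof.
move=> D_gt1; rewrite -(ltn_predK D_gt1) is_pow2S ?ltn_predRL //.
rewrite /mark_arrival /mark_time -pred_Sn; lia.
Qed.

Definition zsched (D t : nat) : zphase :=
  if is_pow2 D then (if t < 2 * D - 1 then ZWait else if t < 3 * D then ZMark else ZEmitted)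
  else (if t < mark_arrival D then ZWait else if t == mark_arrival D then ZPass else ZDone).

Lemma zsched_send D t : 0 < D -> 0 < t ->
  (match zsched D t with ZPass => true | ZMark => is_TGot (third_sched D t) | _ => false end)
  = (t == mark_time D).
Proof.
move=> D_gt0 t_gt0; rewrite /zsched.
case pow2D: (is_pow2 D).
  by rewrite mark_time_pow2 // third_sched_got //; by_conditions.
have D_gt1 : 1 < D by case: D D_gt0 pow2D => [|[|D]] //; rewrite is_pow2_1.
rewrite mark_time_npow2 ?pow2D //; by_conditions.
Qed.

Lemma zsched_step D t : 1 < D -> 0 < t ->
  zstep (zsched D t) (third_sched D t) (t.+1 == mark_arrival D) (t.+1 == 2 * D - 1)
  = zsched D t.+1.
Proof.
move=> D_gt1 t_gt0; have := mark_arrival_ge D_gt1.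
rewrite /zsched is_pow2_arrival // /third_sched /tsched; by_conditions.
Qed.

Lemma zsched_step1 t : 0 < t -> zstep (zsched 1 t) (third_sched 1 t) false false = zsched 1 t.+1.
Proof. move=> t_gt0; rewrite /zsched is_pow2_1 /third_sched /tsched /=; by_conditions. Qed.

Lemma zsched_marked D t :
  (match zsched D t with ZMark | ZEmitted => true | _ => false end)
  = is_pow2 D && (2 * D - 1 <= t).
Proof. rewrite /zsched; case: (is_pow2 D); by_conditions. Qed.

(* G reaches the a-cell at distance [D] at time [gtime D]: it spends two steps
   on each cell, plus one on each marked cell. *)
Definition gtime (D : nat) : nat := 2 * D - 1 + up_log 2 D.

Lemma gtimeS D : 0 < D -> gtime D.+1 = gtime D + 2 + is_pow2 D.
Proof. by move=> D_gt0; rewrite /gtime up_log2S //; lia. Qed.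

Lemma gtime1 : gtime 1 = 1.
Proof. by rewrite /gtime up_log1. Qed.

(* The run on a word [a^A b^n c^C] (from time 1 on), in closed form.  Cell [i]
   of the word is, when [i < A], the a-cell at distance [A - i] to the first b. *)
Section ClosedForm.
Variables A n C : nat.
Hypotheses (A_gt0 : 0 < A) (n_gt0 : 0 < n) (C_gt0 : 0 < C).
Local Notation N := (A + n + C).

Definition letter_at (i : nat) : abc := if i < A then a else if i < A + n then b else c.
Definition rnb_at (i : nat) : nbr :=
  if i.+1 == N then NbEnd else nbr_of_letter (letter_at i.+1).
Definition fsig_at (t i : nat) : fphase :=
  if t + i < N then FWait else if t + i == N then FSend else FDone.
Definition ksig_at (t i : nat) : kphase :=
  if i < A + n then ksched (1 + 2 * (A + n - 1 - i)) t else KWait.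
Definition hsig_at (t i : nat) : kphase :=
  if i < A then ksched (2 * (A - i) + n - 1) t
  else if i < A + n then bsched (A + n - i) t else KWait.
Definition gsig_at (t i : nat) : gphase :=
  if i < A then gsched (gtime (A - i)) (is_pow2 (A - i)) t else GWait.
Definition l1sig_at (t i : nat) : kphase := if i < A then ksched (2 * (A - i) - 1) t else KWait.
Definition l2sig_at (t i : nat) : tphase := if i < A then third_sched (A - i) t else TWait.
Definition zsig_at (t i : nat) : zphase := if i < A then zsched (A - i) t else ZWait.
(* G and H reach the a-cell at distance [D] at times [gtime D] and
   [2D + n - 1]. *)
Definition met_at (t i : nat) : bool :=
  if i < A then (gtime (A - i) == 2 * (A - i) + n - 1) && (gtime (A - i) <= t) else false.

Definition cell_at (t i : nat) : cell :=
  Cell (letter_at i) (rnb_at i) (fsig_at t i) (ksig_at t i) (hsig_at t i) (gsig_at t i)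
       (l1sig_at t i) (l2sig_at t i) (zsig_at t i) (met_at t i).
Definition incoming_at (t i : nat) : message :=
  if i.+1 == N then silent else out_msg (cell_at t i.+1).

Lemma good_pair_at i : i < N -> good_pair (letter_at i) (rnb_at i).
Proof. by move=> lt_iN; rewrite /good_pair /rnb_at /letter_at /nbr_of_letter; by_conditions.
Qed.

Lemma fsig_at_step t i : 0 < t -> i < N ->
  fstep (fsig_at t i) (mF (incoming_at t i) && good_pair (letter_at i) (rnb_at i))
  = fsig_at t.+1 i.
Proof.
move=> t_gt0 lt_iN; rewrite good_pair_at // andbT /incoming_at /fstep.
case last_i: (i.+1 == N) => /=; first by rewrite /fsig_at; by_conditions.
have -> : sends_F (cell_at t i.+1) = (t + i.+1 == N).
  by rewrite /sends_F /= /fsig_at; by_conditions.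
rewrite /fsig_at; by_conditions.
Qed.

Lemma ksig_at_step t i : 0 < t -> i < N ->
  kstep (ksig_at t i) (mK (incoming_at t i)) = ksig_at t.+1 i.
Proof.
move=> t_gt0 lt_iN; rewrite /incoming_at /ksig_at.
case last_i: (i.+1 == N) => /=; first by by_conditions.
rewrite /sends_K /= /ksig_at; case: ifP => lt_iAn; last by by_conditions.
rewrite -ksched_step; congr kstep; case: ifP => lt_i1An; first by rewrite ksched_send; lia.
by rewrite /=; lia.
Qed.

Lemma sends_H_at t j : 0 < t -> sends_H (cell_at t j) =
  if j < A then t == 2 * (A - j) + n else if j < A + n then t == A + n - j else false.
Proof.
by move=> t_gt0; rewrite /sends_H /= /hsig_at /letter_at /ksched /bsched; by_conditions.
Qed.

Lemma hsig_at_step t i : 0 < t -> i < N ->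
  hstep (letter_at i) (hsig_at t i) (mH (incoming_at t i)) = hsig_at t.+1 i.
Proof.
move=> t_gt0 lt_iN; rewrite /incoming_at; case last_i: (i.+1 == N) => /=.
  by rewrite /hsig_at /letter_at /hstep; by_conditions.
rewrite sends_H_at // /hsig_at /letter_at /hstep /ksched /bsched; by_conditions.
Qed.

Lemma sends_L1_at t j : sends_L1 (cell_at t j) = (j < A) && (t == 2 * (A - j)).
Proof. rewrite /sends_L1 /= /l1sig_at /ksched; by_conditions. Qed.

Lemma l1sig_at_step t i : 0 < t -> i < N ->
  kstep (l1sig_at t i) (mL1 (incoming_at t i)) = l1sig_at t.+1 i.
Proof.
move=> t_gt0 lt_iN; rewrite /incoming_at; case last_i: (i.+1 == N) => /=.
  by rewrite /l1sig_at /kstep; by_conditions.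
rewrite sends_L1_at /l1sig_at /kstep /ksched; by_conditions.
Qed.

Lemma sends_L2_at t j : 0 < t ->
  sends_L2 (cell_at t j) = (j < A) && (t == 3 * (A - j) + 1).
Proof.
move=> t_gt0; rewrite /sends_L2 /= /l2sig_at; case: ifP => //= lt_jA.
by rewrite third_sched_send //; lia.
Qed.

Lemma l2sig_at_step t i : 0 < t -> i < N ->
  tstep (l2sig_at t i) (mL2 (incoming_at t i)) = l2sig_at t.+1 i.
Proof.
move=> t_gt0 lt_iN; rewrite /incoming_at; case last_i: (i.+1 == N) => /=.
  by rewrite /l2sig_at; by_conditions.
rewrite sends_L2_at // /l2sig_at.
case: (ltnP i A) => [lt_iA | ge_iA]; last by rewrite /tstep; by_conditions.
case: (ltnP i.+1 A) => [lt_i1A | ge_i1A] /=.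
  have -> : (t == 3 * (A - i.+1) + 1) = (t.+1 == 3 * (A - i) - 1) by lia.
  by apply: third_sched_step; lia.
have -> : A - i = 1 by lia.
exact: third_sched_step1.
Qed.

Lemma sends_Z_at t j : 0 < t ->
  sends_Z (cell_at t j) = (j < A) && (t == mark_time (A - j)).
Proof.
move=> t_gt0; rewrite /sends_Z /= /zsig_at /l2sig_at; case: ifP => //= lt_jA.
by apply: zsched_send => //; lia.
Qed.

Lemma zsig_at_step t i : 0 < t -> i < N ->
  zstep (zsig_at t i) (l2sig_at t i) (mZ (incoming_at t i)) (mL1 (incoming_at t i))
  = zsig_at t.+1 i.
Proof.
move=> t_gt0 lt_iN; rewrite /incoming_at; case last_i: (i.+1 == N) => /=.
  by rewrite /zsig_at /l2sig_at; by_conditions.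
rewrite sends_Z_at // sends_L1_at /zsig_at /l2sig_at.
case: (ltnP i A) => [lt_iA | ge_iA]; last by rewrite /zstep; by_conditions.
case: (ltnP i.+1 A) => [lt_i1A | ge_i1A] /=.
  have -> : (t == mark_time (A - i.+1)) = (t.+1 == mark_arrival (A - i)).
    by rewrite /mark_arrival (_ : (A - i).-1 = A - i.+1); lia.
  have -> : (t == 2 * (A - i.+1)) = (t.+1 == 2 * (A - i) - 1) by lia.
  by apply: zsched_step; lia.
have -> : A - i = 1 by lia.
exact: zsched_step1.
Qed.

Lemma marked_at t i :
  marked (cell_at t i) = [&& i < A, is_pow2 (A - i) & 2 * (A - i) - 1 <= t].
Proof. by rewrite /marked /= /zsig_at; case: ifP => //= _; rewrite zsched_marked. Qed.

Lemma sends_G_at t j : 0 < t ->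
  sends_G (cell_at t j) = (j < A) && (t == gtime (A - j) + 1 + is_pow2 (A - j)).
Proof.
move=> t_gt0; rewrite /sends_G marked_at /= /gsig_at; case: ifP => //= lt_jA.
apply: gsched_send => /eqP ->; rewrite /gtime; lia.
Qed.

Lemma gsig_at_step t i : 0 < t -> i < N ->
  gstep (gsig_at t i) (mG (incoming_at t i)) (marked (cell_at t i)) = gsig_at t.+1 i.
Proof.
move=> t_gt0 lt_iN; rewrite marked_at /incoming_at; case last_i: (i.+1 == N) => /=.
  by rewrite /gsig_at; by_conditions.
rewrite sends_G_at // /gsig_at.
case: (ltnP i A) => [lt_iA | ge_iA] /=; last by by_conditions.
(* The extra step of G depends on the mark, which is set when G is held. *)
have marked_when_held : t == (gtime (A - i)).+1 ->
    is_pow2 (A - i) && (2 * (A - i) - 1 <= t) = is_pow2 (A - i).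
  by move=> /eqP ->; rewrite /gtime; case: (is_pow2 _) => //=; lia.
case: (ltnP i.+1 A) => [lt_i1A | ge_i1A] /=.
  have -> : (t == gtime (A - i.+1) + 1 + is_pow2 (A - i.+1)) = (t.+1 == gtime (A - i)).
    by rewrite (_ : A - i = (A - i.+1).+1) ?gtimeS; lia.
  exact: gsched_step.
have -> : false = (t.+1 == gtime (A - i)) by rewrite (_ : A - i = 1) ?gtime1; lia.
exact: gsched_step.
Qed.

Lemma met_at_step t i : 0 < t -> i < N ->
  met_at t i || [&& is_GWait (gsig_at t i), mG (incoming_at t i),
                    is_KWait (hsig_at t i) & mH (incoming_at t i)] = met_at t.+1 i.
Proof.
move=> t_gt0 lt_iN; rewrite /incoming_at; case last_i: (i.+1 == N) => /=.
  by rewrite /met_at /gsig_at; by_conditions.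
rewrite sends_G_at // sends_H_at // /met_at /gsig_at /hsig_at.
case: (ltnP i A) => [lt_iA | ge_iA] /=; last by by_conditions.
rewrite gsched_wait ksched_wait.
case: (ltnP i.+1 A) => [lt_i1A | ge_i1A] /=.
  by rewrite (_ : A - i = (A - i.+1).+1) ?gtimeS; lia.
by rewrite (_ : A - i = 1) ?gtime1; lia.
Qed.

Lemma later_step_at t i : 0 < t -> i < N ->
  later_step (cell_at t i) (incoming_at t i) = cell_at t.+1 i.
Proof.
move=> t_gt0 lt_iN; rewrite [cell_at t.+1 i]/cell_at /later_step /=.
congr Cell.
- exact: fsig_at_step.
- exact: ksig_at_step.
- exact: hsig_at_step.
- exact: gsig_at_step.
- exact: l1sig_at_step.
- exact: l2sig_at_step.
- exact: zsig_at_step.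
- exact: met_at_step.
Qed.

Lemma first_step_at i : i < N ->
  first_step (letter_at i) (if i.+1 == N then MBound else MSym (letter_msg (letter_at i.+1)))
  = cell_at 1 i.
Proof.
move=> lt_iN; rewrite /first_step /cell_at /rnb_at /fsig_at /ksig_at /hsig_at /gsig_at.
rewrite /l1sig_at /l2sig_at /zsig_at /met_at /letter_at /ksched /bsched /gsched.
rewrite /third_sched /tsched /zsched /gtime.
case: (ltnP i A) => [lt_iA | ge_iA]; last by by_conditions.
have [last_a | D_gt1] : i.+1 = A \/ 1 < A - i by lia.
  have -> : A - i = 1 by lia.
  by rewrite is_pow2_1 up_log1; by_conditions; congr Cell; lia.
have := mark_arrival_ge D_gt1.
by case: (is_pow2 _) => arrival; by_conditions; congr Cell; lia.
Qed.

Lemma accepting_at t :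
  accepting (inr (cell_at t 0))
  = [&& t == N, t == 2 * (A + n), is_pow2 A & up_log 2 A == n].
Proof.
rewrite /accepting marked_at /sends_F /sends_K /= /letter_at /fsig_at /ksig_at /met_at.
rewrite !subn0 A_gt0 (ltn_addr n A_gt0) ksched_send /gtime /=.
by case: (is_pow2 A); by_conditions.
Qed.

End ClosedForm.

(* The cell component of a state of the run; input states only occur at
   time 0. *)
Definition cell_of (s : state) : cell :=
  match s with
  | inr r => r
  | inl x => Cell x NbNone FWait KWait KWait GWait KWait TWait ZWait false
  end.
Definition state_at (x0 : abc) (w : seq abc) (t i : nat) : cell :=
  cell_of (conf L2_oca false x0 w t i).

Lemma conf_succ x0 w t i : conf L2_oca false x0 w t.+1 i = inr (state_at x0 w t.+1 i).
Proof. by rewrite /state_at /=; case: (conf L2_oca false x0 w t i). Qed.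

Lemma conf_step x0 w t i : conf L2_oca false x0 w t.+1 i =
  transition (lmsg false (conf L2_oca false x0 w t) t i) (conf L2_oca false x0 w t i)
             (rmsg (size w) (conf L2_oca false x0 w t) t i).
Proof. by []. Qed.

Lemma state_at_1 x0 w i : state_at x0 w 1 i =
  first_step (nth x0 w i)
    (if i.+1 == size w then MBound else MSym (letter_msg (nth x0 w i.+1))).
Proof. by rewrite /state_at /= /rmsg; case: ifP. Qed.

Lemma received_send_left r : received (of_opt (send_left (inr r))) = out_msg r.
Proof.
rewrite /send_left /out_msg /sends_any; case: ifP => //=.
by case: (sends_F r); case: (sends_K r); case: (sends_H r); case: (sends_G r);
   case: (sends_L1 r); case: (sends_L2 r); case: (sends_Z r).
Qed.

Lemma state_at_succ x0 w t i : 0 < t -> state_at x0 w t.+1 i =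
  later_step (state_at x0 w t i)
    (if i.+1 == size w then silent else out_msg (state_at x0 w t i.+1)).
Proof.
case: t => [|t] // _.
rewrite {1}/state_at conf_step (conf_succ x0 w t i) /rmsg; case: ifP => // _.
by rewrite (conf_succ x0 w t i.+1) /= received_send_left.
Qed.

Definition rnb_in (x0 : abc) (w : seq abc) (i : nat) : nbr :=
  if i.+1 == size w then NbEnd else nbr_of_letter (nth x0 w i.+1).

Lemma state_at_letters x0 w t i : 0 < t ->
  own (state_at x0 w t i) = nth x0 w i /\ rnb (state_at x0 w t i) = rnb_in x0 w i.
Proof.
elim: t i => [|[|t] IH] i // _; first by rewrite state_at_1 /rnb_in; case: ifP.
by rewrite state_at_succ //=; apply: IH.
Qed.

Lemma fsig_shape x0 w t i : i < size w -> fsig (state_at x0 w t.+1 i) = FSend ->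
  t.+1 + i = size w /\
  (forall j, i <= j < size w -> good_pair (nth x0 w j) (rnb_in x0 w j)).
Proof.
elim: t i => [|t IH] i lt_iw.
  rewrite state_at_1; case: ifP => [/eqP last_i | _]; last first.
    by case: (nth x0 w i); case: (nth x0 w i.+1).
  case xc: (nth x0 w i) => // _; split; first by rewrite add1n.
  move=> j /andP[le_ij lt_jw]; have -> : j = i by lia.
  by rewrite xc /rnb_in last_i eqxx.
rewrite state_at_succ //= /fstep; case: (fsig _) => //.
case: ifP => // /andP[]; case: ifP => [_ | /negbT not_last] //= sendsF good_i _.
have fsig_next : fsig (state_at x0 w t.+1 i.+1) = FSend.
  by move: sendsF; rewrite /sends_F; case: (fsig _).
have lt_i1w : i.+1 < size w by lia.
have [arrival goods] := IH i.+1 lt_i1w fsig_next.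
split=> [| j /andP[le_ij lt_jw]]; first lia.
have [lt_ij | ->] : i < j \/ j = i by lia.
  by apply: goods; lia.
have [own_i rnb_i] := state_at_letters x0 w i (ltn0Sn t).
by rewrite -own_i -rnb_i.
Qed.

Fixpoint good_chain (x : abc) (u : seq abc) : bool :=
  if u is y :: u' then good_pair x (nbr_of_letter y) && good_chain y u'
  else good_pair x NbEnd.

Lemma good_chain_nth x0 x u :
  (forall j, j < (size u).+1 -> good_pair (nth x0 (x :: u) j) (rnb_in x0 (x :: u) j)) ->
  good_chain x u.
Proof.
elim: u x => [|y u IH] x goods /=; first by have := goods 0 (ltnSn _).
apply/andP; split; first by have := goods 0 (ltn0Sn _); rewrite /rnb_in /=; case: (size u).
by apply: IH => j lt_ju; have := goods j.+1 lt_ju.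
Qed.

Lemma good_chain_c u : good_chain c u -> c :: u = nseq (size u).+1 c.
Proof. by elim: u => [|[] u IH] //= /IH ->. Qed.

Lemma good_chain_b u : good_chain b u ->
  exists n C, [/\ 0 < n, 0 < C & b :: u = nseq n b ++ nseq C c].
Proof.
elim: u => [|[] u IH] //= chain.
  by have [n [C [n_gt0 C_gt0 ->]]] := IH chain; exists n.+1, C.
by exists 1, (size u).+1; rewrite /= (good_chain_c chain).
Qed.

Lemma good_chain_a u : good_chain a u ->
  exists A n C, [/\ 0 < A, 0 < n, 0 < C & a :: u = nseq A a ++ nseq n b ++ nseq C c].
Proof.
elim: u => [|[] u IH] //= chain.
  by have [A [n [C [A_gt0 n_gt0 C_gt0 ->]]]] := IH chain; exists A.+1, n, C.
by have [n [C [n_gt0 C_gt0 ->]]] := good_chain_b chain; exists 1, n, C.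
Qed.

Lemma size_abc A n C : size (nseq A a ++ nseq n b ++ nseq C c) = A + n + C.
Proof. by rewrite !size_cat !size_nseq addnA. Qed.

Lemma nth_abc A n C x0 i : i < A + n + C ->
  nth x0 (nseq A a ++ nseq n b ++ nseq C c) i = letter_at A n i.
Proof.
move=> lt_iN; rewrite /letter_at !nth_cat !size_nseq !nth_nseq.
by case: ifP => // ge_iA; case: ifP; by_conditions.
Qed.

Lemma state_at_abc A n C x0 t i : 0 < A -> 0 < n -> 0 < C -> i < A + n + C ->
  state_at x0 (nseq A a ++ nseq n b ++ nseq C c) t.+1 i = cell_at A n C t.+1 i.
Proof.
move=> A_gt0 n_gt0 C_gt0; elim: t i => [|t IH] i lt_iN.
  rewrite state_at_1 size_abc nth_abc // -first_step_at //.
  by case: ifP => // /negbT not_last; rewrite nth_abc //; lia.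
rewrite state_at_succ // size_abc IH //.
have -> : (if i.+1 == A + n + C then silent
           else out_msg (state_at x0 (nseq A a ++ nseq n b ++ nseq C c) t.+1 i.+1))
          = incoming_at A n C t.+1 i.
  by rewrite /incoming_at; case: ifP => // /negbT not_last; rewrite IH //; lia.
exact: later_step_at.
Qed.

Lemma accepts_within_cons w x u T : w = x :: u ->
  (exists2 t, t <= T & accepting (conf L2_oca false x w t 0)) ->
  accepts_within L2_oca false w T.
Proof. by move=> ->. Qed.

Lemma L2_accepted w : L2 w -> accepts_within L2_oca false w (size w).
Proof.
case=> n [n_gt0 ->]; set A := 2 ^ n.
have A_gt0 : 0 < A by rewrite expn_gt0.
apply: (@accepts_within_cons _ a (nseq A.-1 a ++ nseq n b ++ nseq (A + n) c)).
  by rewrite -{1}(ltn_predK A_gt0).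
have size_gt0 : 0 < A + n + (A + n) by lia.
rewrite size_abc; exists (A + n + (A + n)) => //.
rewrite -(ltn_predK size_gt0) conf_succ state_at_abc ?(ltn_predK size_gt0) //; try lia.
by rewrite accepting_at /A ?is_pow2_expn ?up_expnK //; lia.
Qed.

Lemma accepted_L2 w : accepts L2_oca false w -> L2 w.
Proof.
case=> T; case: w => [|x u] //= [[|t] _] //; rewrite conf_succ.
move=> acc; have := acc; rewrite /accepting => /and5P[own_a sendsF _ _ _].
have fsig_0 : fsig (state_at x (x :: u) t.+1 0) = FSend.
  by move: sendsF; rewrite /sends_F; case: (fsig _).
have [arrival goods] := @fsig_shape x (x :: u) t 0 (ltn0Sn _) fsig_0.
have [own_0 _] := state_at_letters x (x :: u) 0 (ltn0Sn t).
have x_a : x = a by move: own_a; rewrite own_0; case: (x).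
subst x; have chain : good_chain a u.
  by apply: (good_chain_nth (x0 := a)) => j lt_ju; apply: goods.
have [A [n [C [A_gt0 n_gt0 C_gt0 w_abc]]]] := good_chain_a chain.
rewrite w_abc size_abc in acc arrival *.
rewrite state_at_abc // in acc; last by lia.
move: acc; rewrite accepting_at // => /and4P[_ /eqP size_2An pow2A /eqP log_A].
have A_pow : A = 2 ^ n by rewrite (is_pow2P pow2A) log_A.
exists n; split => //; rewrite A_pow (_ : C = 2 ^ n + n) //; lia.
Qed.

Theorem mainTheorem2 : in_Lrt_MC_OCA (fun _ => 1) L2.
Proof.
exists L2_oca; split.
- by [].
- move=> w; split=> [inL2 | acc]; last exact: accepted_L2.
  by exists (size w); apply: L2_accepted.
- by move=> w acc; apply/L2_accepted/accepted_L2.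
- exists (fun _ => 8); split; first by exists 8, 0 => k _; rewrite muln1.
  by move=> w _; apply: mcom_L2_oca.
Qed.
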